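(* Let $0<r'<r<1$ and $c>0$. Then the map $F:\mathbb{Z}((T))_{r,\le c}\to\mathbb{R}$, $\sum_{n\gg-\infty}a_nT^n\mapsto\sum_{n\gg-\infty}a_n(r')^n$, is continuous.
   Context: $\mathbb{Z}((T))_{r,\le c}$ is the set of integer Laurent series $\sum_{n\gg-\infty}a_nT^n$ ($a_n\in\mathbb{Z}$, $a_n=0$ for $n$ sufficiently negative) with $\sum|a_n|r^n\le c$, with the $T$-adic topology given by the norm $\|f\|=\delta^{v_T(f)}$ for fixed $\delta\in(0,1)$, $v_T(f)$ being the smallest index of a nonzero coefficient. $\mathbb{R}$ has its usual topology. *)

From HB Require Import structures.
From mathcomp Require Import all_boot all_order all_algebra.
From mathcomp Require Import all_classical all_reals topology normedtype sequences.
Set Implicit Arguments. Unset Strict Implicit. Unset Printing Implicit Defensive.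
Import Order.TTheory GRing.Theory Num.Theory numFieldNormedType.Exports.
Local Open Scope ring_scope.

(* An integer Laurent series sum_n a_n T^n is represented by its coefficient
   function a : int -> int, with a_n = 0 for n sufficiently negative. *)
Definition laurent (a : int -> int) : Prop :=
  exists N : int, forall n : int, n < N -> a n = 0.

(* Z((T))_{r, <= c}: Laurent series with sum_n |a_n| r^n <= c.
   The series has nonnegative terms, so "sum <= c" is literally
   "every finite partial sum is <= c". *)
Definition Zr (R : realType) (r c : R) (a : int -> int) : Prop :=
  laurent a /\
  forall s : seq int, uniq s -> \sum_(n <- s) (`|a n|%:~R * r ^ n) <= c.

(* The value sum_n a_n x^n, as the limit of the symmetric partial sums
   over the windows [-M, M] (only finitely many negative indices contribute). *)
Definition laurent_eval (R : realType) (x : R) (a : int -> int) : R :=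
  limn (fun M : nat =>
    \sum_(i < (M + M)%N.+1) ((a (i%:Z - M%:Z))%:~R * x ^ (i%:Z - M%:Z))).

(* T-adic norm ||h|| = delta^(v_T h) (and ||0|| = 0).
   tnorm_lt delta h d  <->  ||h|| < d  (for d > 0):
   every index n with delta^n >= d carries a zero coefficient. *)
Definition tnorm_lt (R : realType) (delta : R) (h : int -> int) (d : R) : Prop :=
  forall n : int, d <= delta ^ n -> h n = 0.

(** Write [h = g - f].  If [g] is [T]-adically close to [f], then [h] vanishes
    below some index [K], so that
    [|F g - F f| = |sum_(n >= K) h_n r'^n| <= (r'/r)^K sum_n (|g_n| + |f_n|) r^n
    <= (r'/r)^K * 2c],
    which is small for large [K] because [r' < r].  The same domination by
    [sum |a_n| r^n <= c] is what makes [F] well defined in the first place. *)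
From HB Require Import structures.
From mathcomp Require Import all_boot all_order all_algebra.
From mathcomp Require Import all_classical all_reals topology normedtype sequences.
From mathcomp Require Import zify.
Import Order.TTheory GRing.Theory Num.Theory numFieldNormedType.Exports.
Local Open Scope ring_scope.

Set Implicit Arguments.
Unset Strict Implicit.
Unset Printing Implicit Defensive.

Lemma ler_wiXz2l (R : realFieldType) (x : R) (m n : int) :
  0 < x -> x <= 1 -> m <= n -> x ^ n <= x ^ m.
Proof.
move=> x_gt0 x_le1 le_mn.
rewrite -(subrK m n) expfzDr ?gt_eqF // ger_pMl ?exprz_gt0 //.
have : 0 <= n - m by rewrite subr_ge0.
by case: (n - m) => [k _|//]; rewrite -exprnP exprn_ile1 // ltW.
Qed.

Lemma exprz_le_shift (R : realFieldType) (x r : R) (K n : int) :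
  0 < x -> x <= r -> K <= n -> x ^ n <= (x / r) ^ K * r ^ n.
Proof.
move=> x_gt0 le_xr le_Kn; have r_gt0 : 0 < r := lt_le_trans x_gt0 le_xr.
rewrite -{1}(divfK (lt0r_neq0 r_gt0) x) exprzMl ?unitfE ?gt_eqF ?divr_gt0 //.
rewrite ler_wpM2r ?exprz_ge0 ?(ltW r_gt0) // ler_wiXz2l ?divr_gt0 //.
by rewrite ler_pdivrMr // mul1r.
Qed.

Lemma norm_limn_le (R : realType) (u : R ^nat) (B : R) :
  cvgn u -> (forall n, `|u n| <= B) -> `|limn u| <= B.
Proof.
move=> cu ub; rewrite -lim_norm //.
by apply: limr_le; [exact: is_cvg_norm | exact: nearW].
Qed.

Section WindowSum.
Variable R : realType.
Implicit Types (F G : int -> R) (M : nat).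

Definition window_sum F M : R := \sum_(i < (M + M).+1) F (i%:Z - M%:Z).

Lemma laurent_evalE (x : R) (a : int -> int) :
  laurent_eval x a = limn (window_sum (fun n => (a n)%:~R * x ^ n)).
Proof. by []. Qed.

Lemma window_sumS F M :
  window_sum F M.+1 = F (- M.+1%:Z) + window_sum F M + F M.+1%:Z.
Proof.
rewrite /window_sum addSn addnS big_ord_recl big_ord_recr /= -addrA sub0r.
congr (_ + (_ + F _)); last by rewrite /bump /=; lia.
by apply: eq_bigr => i _; congr F; rewrite /bump /=; lia.
Qed.

Lemma window_sumB F G M :
  window_sum F M - window_sum G M = window_sum (fun n => F n - G n) M.
Proof. by rewrite /window_sum -sumrB. Qed.

Lemma window_sumD F G M :
  window_sum (fun n => F n + G n) M = window_sum F M + window_sum G M.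
Proof. by rewrite /window_sum big_split. Qed.

Lemma window_sumZ (k : R) F M :
  window_sum (fun n => k * F n) M = k * window_sum F M.
Proof. by rewrite /window_sum mulr_sumr. Qed.

Lemma ler_window_sum F G M :
  (forall n, F n <= G n) -> window_sum F M <= window_sum G M.
Proof. by move=> le_FG; apply: ler_sum => i _. Qed.

Lemma ler_norm_window_sum F M :
  `|window_sum F M| <= window_sum (fun n => `|F n|) M.
Proof. exact: ler_norm_sum. Qed.

Lemma window_sum_uniq_seq F M :
  exists2 s : seq int, uniq s & window_sum F M = \sum_(n <- s) F n.
Proof.
exists [seq i%:Z - M%:Z | i <- iota 0 (M + M).+1].
  by rewrite map_inj_uniq ?iota_uniq // => i j /addIr [].
by rewrite /window_sum big_map -(big_mkord xpredT (fun i => F (i%:Z - M%:Z))) /index_iota subn0.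
Qed.

Lemma window_sum_cvg_ge0 F (B : R) :
  (forall n, 0 <= F n) -> (forall M, window_sum F M <= B) -> cvgn (window_sum F).
Proof.
move=> F_ge0 ub; apply/cvg_ex; eexists; apply: nondecreasing_cvgn.
  apply/nondecreasing_seqP => M.
  by rewrite window_sumS -addrA ler_wpDl // ler_wpDr.
by exists B => _ [M _ <-].
Qed.

Lemma window_sum_cvg_dominated F G (B : R) :
  (forall n, `|F n| <= G n) -> (forall M, window_sum G M <= B) ->
  cvgn (window_sum F).
Proof.
move=> le_FG ub.
have FG_ge0 n : 0 <= F n + G n.
  by have /ler_normlP[NG_le_F _] := le_FG n; rewrite -lerBlDl sub0r.
have -> : window_sum F = window_sum (fun n => F n + G n) - window_sum G.
  apply: funext => M; rewrite -[RHS]/(window_sum _ M - window_sum G M) window_sumB.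
  by congr window_sum; apply: funext => n; rewrite addrK.
have G_ge0 n : 0 <= G n := le_trans (normr_ge0 _) (le_FG n).
apply: is_cvgB; last exact: window_sum_cvg_ge0 G_ge0 ub.
apply: (window_sum_cvg_ge0 FG_ge0 (B := B + B)) => M.
apply: le_trans (lerD (ub M) (ub M)); rewrite -window_sumD; apply: ler_window_sum => n.
by rewrite lerD2r; exact: le_trans (ler_norm _) (le_FG n).
Qed.

End WindowSum.

Section LaurentEval.
Variable R : realType.
Implicit Types (x r c B : R) (a f g : int -> int).

Lemma laurent_term_dominated x r K a :
  0 < x -> x <= r -> (forall n, n < K -> a n = 0) ->
  forall n, `|(a n)%:~R * x ^ n| <= (x / r) ^ K * (`|a n|%:~R * r ^ n).
Proof.
move=> x_gt0 le_xr a_vanish n.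
rewrite normrM -intr_norm (ger0_norm (exprz_ge0 _ (ltW x_gt0))) mulrCA.
have [/a_vanish->|le_Kn] := ltP n K; first by rewrite normr0 !mul0r.
by rewrite ler_wpM2l ?ler0z ?exprz_le_shift.
Qed.

Section Dominated.
Variables (x r B : R) (K : int) (a : int -> int).
Hypotheses (x_gt0 : 0 < x) (le_xr : x <= r) (a_vanish : forall n, n < K -> a n = 0).
Hypothesis weight_le : forall M, window_sum (fun n => `|a n|%:~R * r ^ n) M <= B.

Let scaled_weight_le M :
  window_sum (fun n => (x / r) ^ K * (`|a n|%:~R * r ^ n)) M <= (x / r) ^ K * B.
Proof.
have r_gt0 := lt_le_trans x_gt0 le_xr.
by rewrite window_sumZ ler_wpM2l // exprz_ge0 // divr_ge0 // ltW.
Qed.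

Lemma laurent_eval_cvg : cvgn (window_sum (fun n => (a n)%:~R * x ^ n)).
Proof.
exact: window_sum_cvg_dominated (laurent_term_dominated x_gt0 le_xr a_vanish)
  scaled_weight_le.
Qed.

Lemma norm_laurent_eval_le : `|laurent_eval x a| <= (x / r) ^ K * B.
Proof.
apply: norm_limn_le laurent_eval_cvg _ => M.
apply: le_trans (ler_norm_window_sum _ _) _; apply: le_trans (scaled_weight_le M).
exact: ler_window_sum (laurent_term_dominated x_gt0 le_xr a_vanish).
Qed.

End Dominated.

Lemma laurent_evalB x g f :
  cvgn (window_sum (fun n => (g n)%:~R * x ^ n)) ->
  cvgn (window_sum (fun n => (f n)%:~R * x ^ n)) ->
  laurent_eval x g - laurent_eval x f = laurent_eval x (fun n => g n - f n).
Proof.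
move=> cvg_g cvg_f; rewrite !laurent_evalE -limB //; congr (limn _).
apply: funext => M; rewrite -[LHS]/(window_sum _ M - window_sum _ M) window_sumB.
by congr window_sum; apply: funext => n; rewrite intrB mulrBl.
Qed.

Lemma Zr_window_sum_le r c a M :
  Zr r c a -> window_sum (fun n => `|a n|%:~R * r ^ n) M <= c.
Proof.
case=> _ a_le.
by have [s s_uniq ->] := window_sum_uniq_seq (fun n => `|a n|%:~R * r ^ n) M; exact: a_le.
Qed.

Lemma Zr_laurent_eval_cvg x r c a :
  0 < x -> x <= r -> Zr r c a -> cvgn (window_sum (fun n => (a n)%:~R * x ^ n)).
Proof.
move=> x_gt0 le_xr Za; have [[K a_vanish] _] := Za.
exact: laurent_eval_cvg x_gt0 le_xr a_vanish (fun M => Zr_window_sum_le M Za).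
Qed.

Lemma Zr_sub_window_sum_le r c g f M : 0 <= r -> Zr r c g -> Zr r c f ->
  window_sum (fun n => `|g n - f n|%:~R * r ^ n) M <= c + c.
Proof.
move=> r_ge0 Zg Zf.
apply: le_trans (lerD (Zr_window_sum_le M Zg) (Zr_window_sum_le M Zf)).
rewrite -window_sumD; apply: ler_window_sum => n.
by rewrite -mulrDl ler_wpM2r ?exprz_ge0 // -intrD ler_int ler_normB.
Qed.

Lemma tnorm_lt_vanish (delta : R) (h : int -> int) (K : int) :
  0 < delta -> delta <= 1 -> tnorm_lt delta h (delta ^ K) ->
  forall n, n < K -> h n = 0.
Proof. by move=> delta_gt0 delta_le1 h_small n /ltW le_nK; apply/h_small/ler_wiXz2l. Qed.

End LaurentEval.

Theorem mainTheorem13 (R : realType) (r r' c delta : R) :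
  0 < r' -> r' < r -> r < 1 -> 0 < c -> 0 < delta -> delta < 1 ->
  forall f : int -> int, Zr r c f ->
  forall eps : R, 0 < eps ->
  exists d : R, 0 < d /\
    forall g : int -> int, Zr r c g ->
      tnorm_lt delta (fun n => g n - f n) d ->
      `|laurent_eval r' g - laurent_eval r' f| < eps.
Proof.
move=> r'_gt0 lt_r'r r_lt1 c_gt0 delta_gt0 delta_lt1 f Zf eps eps_gt0.
have r_gt0 : 0 < r := lt_trans r'_gt0 lt_r'r.
have [K small_K] : exists K : nat, (r' / r) ^+ K * (c + c) < eps.
  have q_ge0 : 0 <= r' / r by rewrite divr_ge0 ?ltW.
  have q_lt1 : `|r' / r| < 1 by rewrite ger0_norm // ltr_pdivrMr // mul1r.
  have e_gt0 : 0 < eps / (c + c) by rewrite divr_gt0 ?addr_gt0.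
  have [K _ small] := cvgr0_norm_lt _ (cvg_expr q_lt1) _ e_gt0.
  exists K; rewrite -ltr_pdivlMr ?addr_gt0 //.
  by have := small K (leqnn K); rewrite /= ger0_norm // exprn_ge0.
exists (delta ^ K%:Z); split; first exact: exprz_gt0.
move=> g Zg gf_small.
have cvg_eval := Zr_laurent_eval_cvg r'_gt0 (ltW lt_r'r).
rewrite (laurent_evalB (cvg_eval _ _ Zg) (cvg_eval _ _ Zf)).
apply: le_lt_trans small_K; rewrite exprnP.
apply: norm_laurent_eval_le r'_gt0 (ltW lt_r'r) _ _.
- exact: tnorm_lt_vanish delta_gt0 (ltW delta_lt1) gf_small.
- by move=> M; exact: Zr_sub_window_sum_le (ltW r_gt0) Zg Zf.
Qed.
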